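(* Let $A$ and $B$ be disjoint finite alphabets, and let $\rho_A$ and $\rho_B$ be equivalence relations on $A^*$ and $B^*$ respectively, each having infinitely many equivalence classes. Then the language $L(\rho_A,\rho_B)=\{u_1v_1u_2v_2 : (u_1,u_2)\in\rho_A,\ (v_1,v_2)\in\rho_B\}$ (where $u_1,u_2\in A^*$ and $v_1,v_2\in B^*$) is not context-free. *)

From Stdlib Require List.
From mathcomp Require Import all_boot.
Set Implicit Arguments. Unset Strict Implicit. Unset Printing Implicit Defensive.

(* Nonterminals are
   natural numbers; a grammar has a start symbol and a finite list of
   productions X -> rhs, rhs a word over nonterminals + terminals. *)
Record cfg (T : Type) := CFG {
  cfg_start : nat;
  cfg_rules : list (nat * list (nat + T))
}.

Inductive derives (T : Type) (G : cfg T) : nat -> seq T -> Prop :=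
| der_rule X rhs w :
    List.In (X, rhs) (cfg_rules G) -> derives_seq G rhs w -> derives G X w
with derives_seq (T : Type) (G : cfg T) : seq (nat + T) -> seq T -> Prop :=
| ds_nil : derives_seq G [::] [::]
| ds_term t r w : derives_seq G r w -> derives_seq G (inr t :: r) (t :: w)
| ds_nt X r u w : derives G X u -> derives_seq G r w ->
    derives_seq G (inl X :: r) (u ++ w).

Definition cfg_lang (T : Type) (G : cfg T) (w : seq T) : Prop :=
  derives G (cfg_start G) w.

Definition context_free (T : Type) (L : seq T -> Prop) : Prop :=
  exists G : cfg T, forall w, L w <-> cfg_lang G w.

Definition prop_equivalence (X : Type) (r : X -> X -> Prop) : Prop :=
  (forall x, r x x) /\ (forall x y, r x y -> r y x) /\
  (forall x y z, r x y -> r y z -> r x z).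

Definition infinitely_many_classes (X : Type) (r : X -> X -> Prop) : Prop :=
  ~ exists s : list X, forall x, exists2 y, List.In y s & r x y.

(* L(rhoA, rhoB) over the disjoint union alphabet A + B. *)
Definition L_rho (A B : Type) (rA : seq A -> seq A -> Prop)
    (rB : seq B -> seq B -> Prop) (w : seq (A + B)) : Prop :=
  exists u1 u2 v1 v2, rA u1 u2 /\ rB v1 v2 /\
    w = map inl u1 ++ map inr v1 ++ map inl u2 ++ map inr v2.

From mathcomp Require Import all_boot zify.
From Stdlib Require Classical_Prop Wf_nat.
Set Implicit Arguments. Unset Strict Implicit. Unset Printing Implicit Defensive.

(* Pick a in A* and b in B*, each of minimal length in its class and longer
   than the pumping constant p, and pump the word abab down.  The deleted
   letters lie in a window of length at most p, hence inside two adjacent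
   blocks, which both survive nonempty; so any decomposition a1 b1 a2 b2 of
   the shorter word keeps one A-block equal to a and one B-block equal to b.
   As a1 ~ a2 and b1 ~ b2, minimality makes every block at least as long as
   the original one, which contradicts the loss of letters.  Only the
   pump-down half of the pumping lemma is needed: along a heaviest path of a
   derivation either a nonterminal repeats, or the derived word has length at
   most m^N for N nonterminals and right-hand sides of length at most m. *)

Section SizedDerivations.
Variables (T : Type) (G : cfg T).

(* The index counts rule applications; it makes "pump down" a well-founded step. *)
Inductive derivesn : nat -> nat -> seq T -> Prop :=
| dern_rule n X rhs w :
    List.In (X, rhs) (cfg_rules G) -> derivesn_seq n rhs w -> derivesn n.+1 X w
with derivesn_seq : nat -> seq (nat + T) -> seq T -> Prop :=
| dersn_nil : derivesn_seq 0 [::] [::]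
| dersn_term n t r w : derivesn_seq n r w -> derivesn_seq n (inr t :: r) (t :: w)
| dersn_nt n1 n2 X r u w :
    derivesn n1 X u -> derivesn_seq n2 r w -> derivesn_seq (n1 + n2) (inl X :: r) (u ++ w).

Scheme derivesn_mut := Induction for derivesn Sort Prop
  with derivesn_seq_mut := Induction for derivesn_seq Sort Prop.
Scheme derives_mut := Induction for derives Sort Prop
  with derives_seq_mut := Induction for derives_seq Sort Prop.

Lemma derivesP X w : derives G X w <-> exists n, derivesn n X w.
Proof.
split=> [|[n]].
- apply: (@derives_mut T G (fun X w _ => exists n, derivesn n X w)
                          (fun r w _ => exists n, derivesn_seq n r w)).
  + by move=> X' rhs w' Hin _ [n Dn]; exists n.+1; apply: dern_rule Hin Dn.
  + by exists 0; constructor.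
  + by move=> t r w' _ [n Dn]; exists n; constructor.
  + by move=> X' r u w' _ [n1 D1] _ [n2 D2]; exists (n1 + n2); constructor.
- apply: (@derivesn_mut (fun _ X w _ => derives G X w)
                        (fun _ r w _ => derives_seq G r w)).
  + by move=> n' X' rhs w' Hin _ Dw; apply: der_rule Hin Dw.
  + by constructor.
  + by move=> n' t r w' _ Dw; constructor.
  + by move=> n1 n2 X' r u w' _ Du _ Dw; constructor.
Qed.

End SizedDerivations.

Section PumpDown.
Variables (T : Type) (G : cfg T) (N m : nat).
Hypothesis m_gt0 : 0 < m.
Hypothesis rules_bounded :
  forall X rhs, List.In (X, rhs) (cfg_rules G) -> X < N /\ size rhs <= m.

Definition pumps_down X w n := exists u v x y z n',
  [/\ w = u ++ v ++ x ++ y ++ z, size (v ++ x ++ y) <= m ^ N.+1, n' < n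
    & derivesn G n' X (u ++ x ++ z)].

Definition pumps_down_seq r w n := exists u v x y z n',
  [/\ w = u ++ v ++ x ++ y ++ z, size (v ++ x ++ y) <= m ^ N.+1, n' < n
    & derivesn_seq G n' r (u ++ x ++ z)].

Definition occurs Y w n := exists u x z n',
  [/\ n' <= n, w = u ++ x ++ z & derivesn G n' Y x].

(* [S] collects distinct nonterminals along a heaviest path of the derivation. *)
Definition nt_bounded c w n := exists S : seq nat,
  [/\ uniq S, {subset S <= iota 0 N}, size w <= c * m ^ size S
    & {in S, forall Y, occurs Y w n}].

Lemma size_nt_path (S : seq nat) : uniq S -> {subset S <= iota 0 N} -> size S <= N.
Proof. by move=> US SN; rewrite -(size_iota 0 N); apply: uniq_leq_size. Qed.

Lemma occurs_catr Y u w n1 n2 : occurs Y u n1 -> occurs Y (u ++ w) (n1 + n2).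
Proof.
move=> [p [x [q [n' [le_n' -> Dx]]]]]; exists p, x, (q ++ w), n'.
by rewrite -!catA (leq_trans le_n' (leq_addr _ _)).
Qed.

Lemma occurs_catl Y u w n1 n2 : occurs Y w n2 -> occurs Y (u ++ w) (n1 + n2).
Proof.
move=> [p [x [q [n' [le_n' -> Dx]]]]]; exists (u ++ p), x, q, n'.
by rewrite -!catA (leq_trans le_n' (leq_addl _ _)).
Qed.

Lemma pump_rule X rhs w n :
  List.In (X, rhs) (cfg_rules G) -> derivesn_seq G n rhs w ->
  pumps_down_seq rhs w n \/ nt_bounded (size rhs) w n ->
  pumps_down X w n.+1 \/ nt_bounded 1 w n.+1.
Proof.
move=> Hin Dw [[u [v [x [y [z [n' [Ew Hs lt_n' Dp]]]]]]] | [S [US SN Hw occS]]].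
  by left; exists u, v, x, y, z, n'.+1; split=> //; apply: dern_rule Hin Dp.
have [XN le_rhs_m] := rules_bounded Hin.
have le_w : size w <= m ^ (size S).+1.
  by rewrite expnS (leq_trans Hw) // leq_mul2r le_rhs_m orbT.
have [XS | XnS] := boolP (X \in S).
  (* X repeats below itself: replace the outer derivation of X by the inner one. *)
  left; have [u [x [z [n' [le_n' Ew Dx]]]]] := occS X XS.
  exists [::], u, x, z, [::], n'; rewrite !cats0 -Ew; split=> //=.
  by rewrite (leq_trans le_w) // leq_pexp2l // ltnS size_nt_path.
right; exists (X :: S); split=> //=; first by rewrite XnS.
- by move=> Y; rewrite inE => /predU1P [->|/SN //]; rewrite mem_iota.
- by rewrite mul1n.
move=> Y; rewrite inE => /predU1P [-> | /occS occY].
  by exists [::], w, [::], n.+1; rewrite cats0; split=> //; apply: dern_rule Hin Dw.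
exact: (occurs_catl [::] 1 occY).
Qed.

Lemma pump_term t r w n :
  pumps_down_seq r w n \/ nt_bounded (size r) w n ->
  pumps_down_seq (inr t :: r) (t :: w) n \/ nt_bounded (size r).+1 (t :: w) n.
Proof.
move=> [[u [v [x [y [z [n' [-> Hs lt_n' Dp]]]]]]] | [S [US SN Hw occS]]].
  by left; exists (t :: u), v, x, y, z, n'; split=> //; constructor.
right; exists S; split=> // [|Y /occS occY].
  by rewrite mulSn /= -add1n leq_add // expn_gt0 m_gt0.
by have := occurs_catl [:: t] 0 occY.
Qed.

Lemma pump_cat X r u w n1 n2 :
  derivesn G n1 X u -> derivesn_seq G n2 r w ->
  pumps_down X u n1 \/ nt_bounded 1 u n1 ->
  pumps_down_seq r w n2 \/ nt_bounded (size r) w n2 ->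
  pumps_down_seq (inl X :: r) (u ++ w) (n1 + n2) \/
  nt_bounded (size r).+1 (u ++ w) (n1 + n2).
Proof.
move=> Du Dw [[p [v [x [y [q [n' [-> Hs lt_n' Dp]]]]]]] | [S1 [US1 SN1 Hu occS1]]].
  left; exists p, v, x, y, (q ++ w), (n' + n2); rewrite -!catA ltn_add2r.
  by split=> //; have := dersn_nt Dp Dw; rewrite -!catA.
case=> [[p [v [x [y [q [n' [-> Hs lt_n' Dp]]]]]]] | [S2 [US2 SN2 Hw occS2]]].
  left; exists (u ++ p), v, x, y, q, (n1 + n'); rewrite -!catA ltn_add2l.
  by split=> //; apply: dersn_nt.
right; rewrite mul1n in Hu.
have [le_S12 | lt_S21] := leqP (size S1) (size S2).
  exists S2; split=> // [|Y /occS2]; last exact: occurs_catl.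
  by rewrite size_cat mulSn leq_add // (leq_trans Hu) // leq_pexp2l.
exists S1; split=> // [|Y /occS1]; last exact: occurs_catr.
by rewrite size_cat mulSn leq_add // (leq_trans Hw) // leq_mul2l leq_pexp2l ?orbT // ltnW.
Qed.

Lemma derivesn_pumps_or_bounded n X w :
  derivesn G n X w -> pumps_down X w n \/ nt_bounded 1 w n.
Proof.
apply: (@derivesn_mut T G (fun n X w _ => pumps_down X w n \/ nt_bounded 1 w n)
           (fun n r w _ => pumps_down_seq r w n \/ nt_bounded (size r) w n)).
- by move=> n' X' rhs w' Hin Dw; apply: pump_rule.
- by right; exists [::].
- by move=> n' t r w' _; apply: pump_term.
- by move=> n1 n2 X' r u w' Du + Dw; apply: pump_cat.
Qed.

Lemma derivesn_pump_down n X w :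
  derivesn G n X w -> m ^ N.+1 < size w ->
  exists u v x y z, [/\ w = u ++ v ++ x ++ y ++ z, size (v ++ x ++ y) <= m ^ N.+1,
    0 < size (v ++ y) & derives G X (u ++ x ++ z)].
Proof.
elim/ltn_ind: n X w => n IH X w Dw lt_w.
case: (derivesn_pumps_or_bounded Dw)
  => [[u [v [x [y [z [n' [Ew Hs lt_n' Dp]]]]]]] | [S [US SN Hw _]]].
  case: (posnP (size (v ++ y))) => [vy0 | vy_gt0].
    move: vy0 Ew; rewrite size_cat => /eqP; rewrite addn_eq0 => /andP [/nilP -> /nilP ->].
    by move=> Ew; apply: (IH n') => //; rewrite Ew.
  by exists u, v, x, y, z; split=> //; apply/derivesP; exists n'.
have := leq_pexp2l m_gt0 (leqW (size_nt_path US SN)).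
by rewrite mul1n in Hw; lia.
Qed.

End PumpDown.

Fixpoint rules_bound T (rules : list (nat * list (nat + T))) : nat :=
  if rules is r :: rules' then maxn (maxn r.1.+1 (size r.2)) (rules_bound rules') else 0.

Lemma rules_boundP T (rules : list (nat * list (nat + T))) X rhs :
  List.In (X, rhs) rules -> X < rules_bound rules /\ size rhs <= rules_bound rules.
Proof.
elim: rules => [//|[Y r] rules IH] /= [[-> ->] | /IH [lt_X le_rhs]].
  by rewrite !leq_max ltnSn leqnn !orbT.
by rewrite !leq_max lt_X le_rhs !orbT.
Qed.

Lemma cfg_pump_down T (G : cfg T) : exists p, forall w, cfg_lang G w -> p < size w ->
  exists u v x y z, [/\ w = u ++ v ++ x ++ y ++ z, size (v ++ x ++ y) <= p,
    0 < size (v ++ y) & cfg_lang G (u ++ x ++ z)].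
Proof.
set K := (rules_bound (cfg_rules G)).+1.
have bounded X rhs : List.In (X, rhs) (cfg_rules G) -> X < K /\ size rhs <= K.
  by move=> /rules_boundP [lt_X le_rhs]; split; apply: leqW.
exists (K ^ K.+1) => w /derivesP [n Dw].
exact: (derivesn_pump_down (isT : 0 < K) bounded Dw).
Qed.

Lemma mask_window (X : Type) (W1 W2 u v x y z : seq X) :
  W1 ++ W2 = u ++ v ++ x ++ y ++ z ->
  exists m1 m2, [/\ u ++ x ++ z = mask m1 W1 ++ mask m2 W2,
    size W1 <= size (mask m1 W1) + size (v ++ y)
    & size W2 <= size (mask m2 W2) + size (v ++ y)].
Proof.
move=> Ew.
set m := nseq (size u) true ++ nseq (size v) false ++ nseq (size x) true
  ++ nseq (size y) false ++ nseq (size z) true.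
have mask_m : mask m (W1 ++ W2) = u ++ x ++ z.
  by rewrite Ew !mask_cat ?size_nseq // !mask_true // !mask_false.
have size_m : size m = size W1 + size W2 by rewrite -size_cat Ew !size_cat !size_nseq.
have count_m : count (predC id) m = size (v ++ y).
  by rewrite !count_cat !count_nseq size_cat /=; lia.
set m1 := take (size W1) m; set m2 := drop (size W1) m.
have size_m1 : size m1 = size W1 by rewrite size_take size_m; case: ltnP; lia.
have size_m2 : size m2 = size W2 by rewrite size_drop size_m addKn.
have count_m12 : count (predC id) m1 + count (predC id) m2 = size (v ++ y).
  by rewrite -count_cat cat_take_drop.
exists m1, m2; rewrite -mask_m -mask_cat // cat_take_drop !size_mask //.
move: (count_predC id m1) (count_predC id m2); rewrite size_m1 size_m2.
by split=> //; lia.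
Qed.

Lemma cat_prefix (X : Type) (s1 s2 t1 t2 : seq X) :
  s1 ++ s2 = t1 ++ t2 -> size t1 <= size s1 -> exists s, s1 = t1 ++ s /\ t2 = s ++ s2.
Proof.
elim: t1 s1 => [|e t1 IH] s1 /=; first by move=> <-; exists s1.
by case: s1 => [|e' s1] //= [-> /IH IHs /IHs [s [-> ->]]]; exists s.
Qed.

Lemma cat_window (X : Type) (P Q S u w z : seq X) :
  P ++ Q ++ S = u ++ w ++ z -> size P <= size u -> size (u ++ w) <= size (P ++ Q) ->
  exists u' z', [/\ u = P ++ u', z = z' ++ S & Q = u' ++ w ++ z'].
Proof.
move=> E le_P le_uw.
have [z' [EPQ ->]] : exists z', P ++ Q = (u ++ w) ++ z' /\ z = z' ++ S.
  by apply: cat_prefix le_uw; rewrite -!catA.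
rewrite -catA in EPQ; have [u' [-> EQ]] := cat_prefix (esym EPQ) le_P.
by exists u', z'.
Qed.

Lemma window_two_blocks (A B C : Type) (f : A -> C) (g : B -> C) (P S : seq C)
    a b u v x y z :
  P ++ map f a ++ map g b ++ S = u ++ v ++ x ++ y ++ z ->
  size P <= size u -> size (u ++ v ++ x ++ y) <= size (P ++ map f a ++ map g b) ->
  size (v ++ x ++ y) < size a -> size (v ++ x ++ y) < size b ->
  exists a' b', [/\ 0 < size a', 0 < size b' & u ++ x ++ z = P ++ map f a' ++ map g b' ++ S].
Proof.
move=> E le_P le_uvxy lt_a lt_b.
have E' : P ++ (map f a ++ map g b) ++ S = u ++ (v ++ x ++ y) ++ z by rewrite -!catA.
have [u' [z' [-> -> EQ]]] := cat_window E' le_P le_uvxy.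
rewrite -!catA in EQ; have [m1 [m2 [Exz le_m1 le_m2]]] := mask_window EQ.
exists (mask m1 a), (mask m2 b).
have -> : (P ++ u') ++ x ++ z' ++ S = P ++ (u' ++ x ++ z') ++ S by rewrite -!catA.
rewrite Exz !map_mask -!catA; rewrite -!map_mask !size_map !size_cat in le_m1 le_m2.
by rewrite !size_cat in lt_a lt_b; split=> //; lia.
Qed.

Section Blocks.
Variables A B : Type.

Definition abab (a1 : seq A) (b1 : seq B) (a2 : seq A) (b2 : seq B) : seq (A + B) :=
  map inl a1 ++ map inr b1 ++ map inl a2 ++ map inr b2.

Lemma size_abab a1 b1 a2 b2 :
  size (abab a1 b1 a2 b2) = size a1 + size b1 + size a2 + size b2.
Proof. by rewrite !size_cat !size_map !addnA. Qed.

Definition is_inl (e : A + B) := if e is inl _ then true else false.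
Definition starts_inl (s : seq (A + B)) := if s is e :: _ then is_inl e else false.
Definition starts_inr (s : seq (A + B)) := if s is e :: _ then ~~ is_inl e else false.

Lemma map_inl_cat_inj a a' s s' :
  map inl a ++ s = map inl a' ++ s' -> ~~ starts_inl s -> ~~ starts_inl s' ->
  a = a' /\ s = s'.
Proof.
elim: a a' => [|e a IH] [|e' a'] //=.
- by move=> ->.
- by move=> <-.
by move=> [-> E] ns ns'; have [-> ->] := IH _ E ns ns'.
Qed.

Lemma map_inr_cat_inj b b' s s' :
  map inr b ++ s = map inr b' ++ s' -> ~~ starts_inr s -> ~~ starts_inr s' ->
  b = b' /\ s = s'.
Proof.
elim: b b' => [|e b IH] [|e' b'] //=.
- by move=> ->.
- by move=> <-.
by move=> [-> E] ns ns'; have [-> ->] := IH _ E ns ns'.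
Qed.

Lemma abab_inj a1 b1 a2 b2 a1' b1' a2' b2' :
  0 < size b1' -> 0 < size a2' ->
  abab a1 b1 a2 b2 = abab a1' b1' a2' b2' -> [/\ a1 = a1', b1 = b1', a2 = a2' & b2 = b2'].
Proof.
case: b1' a2' => [|b' b1'] // [|a' a2'] // _ _.
have not_inl_map_inr q : ~~ starts_inl (map inr q) by case: q.
have no_inl q s : map inr q = s -> has is_inl s -> False by move=> <-; elim: q.
case: b1 => [|b b1] E.
  rewrite /abab /= catA -map_cat in E.
  have [_ E'] := map_inl_cat_inj E (not_inl_map_inr _) isT.
  by exfalso; apply: no_inl E' _; rewrite /= has_cat /= orbT.
have [-> {}E] := map_inl_cat_inj E isT isT.
case: a2 => [|a a2] in E *.
  rewrite /= -map_cat in E; exfalso.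
  by apply: (no_inl (b :: b1 ++ b2)) E _; rewrite /= has_cat /= orbT.
have [-> {}E] := map_inr_cat_inj E isT isT.
have [-> E2] := map_inl_cat_inj E (not_inl_map_inr _) (not_inl_map_inr _).
by split=> //; apply: inj_map E2 => ? ? [].
Qed.

Lemma abab_pump_window a1 b1 a2 b2 u v x y z c1 d1 c2 d2 :
  abab a1 b1 a2 b2 = u ++ v ++ x ++ y ++ z ->
  size (v ++ x ++ y) < size a1 -> size (v ++ x ++ y) < size b1 ->
  size (v ++ x ++ y) < size a2 -> size (v ++ x ++ y) < size b2 ->
  u ++ x ++ z = abab c1 d1 c2 d2 -> (c1 = a1 \/ c2 = a2) /\ (d1 = b1 \/ d2 = b2).
Proof.
move=> Ew lt_a1 lt_b1 lt_a2 lt_b2 Ec.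
have [le_uvxy | lt_ab1_uvxy] :=
  leqP (size (u ++ v ++ x ++ y)) (size (map inl a1 ++ map inr b1)).
  have [a' [b' [_ lt0_b' Exz]]] := window_two_blocks (P := [::]) Ew isT le_uvxy lt_a1 lt_b1.
  have [_ _ -> ->] := abab_inj lt0_b' (leq_ltn_trans (leq0n _) lt_a2) (etrans (esym Ec) Exz).
  by split; right.
have [le_ab1_u | lt_u_ab1] := leqP (size (map inl a1 ++ map inr b1)) (size u).
  have Ew' : (map inl a1 ++ map inr b1) ++ map inl a2 ++ map inr b2 ++ [::] =
             u ++ v ++ x ++ y ++ z.
    by rewrite cats0 -catA.
  have le_uvxy : size (u ++ v ++ x ++ y) <=
      size ((map inl a1 ++ map inr b1) ++ map inl a2 ++ map inr b2).
    by move/(congr1 size): Ew'; rewrite !size_cat addn0; lia.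
  have [a' [b' [lt0_a' _ Exz]]] := window_two_blocks Ew' le_ab1_u le_uvxy lt_a2 lt_b2.
  rewrite cats0 -catA in Exz.
  have [-> -> _ _] := abab_inj (leq_ltn_trans (leq0n _) lt_b1) lt0_a' (etrans (esym Ec) Exz).
  by split; left.
have le_a1_u : size (map inl a1 : seq (A + B)) <= size u.
  by move: lt_ab1_uvxy lt_b1; rewrite !size_cat !size_map; lia.
have le_uvxy : size (u ++ v ++ x ++ y) <= size (map inl a1 ++ map inr b1 ++ map inl a2).
  by move: lt_u_ab1 lt_a2; rewrite !size_cat !size_map; lia.
have [b' [a' [lt0_b' lt0_a' Exz]]] := window_two_blocks Ew le_a1_u le_uvxy lt_b1 lt_a2.
have [-> _ _ ->] := abab_inj lt0_b' lt0_a' (etrans (esym Ec) Exz).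
by split; [left | right].
Qed.

End Blocks.

Fixpoint words_upto (X : finType) (n : nat) : seq (seq X) :=
  if n is n'.+1 then [::] :: [seq e :: s | e <- enum X, s <- words_upto X n'] else [:: [::]].

Lemma words_uptoP (X : finType) n (s : seq X) : size s <= n -> s \in words_upto X n.
Proof.
elim: n s => [|n IH] [|e s] //= le_s.
by rewrite inE allpairs_f ?orbT ?mem_enum ?IH.
Qed.

Lemma mem_In (X : eqType) (y : X) s : y \in s -> List.In y s.
Proof. by elim: s => [//|e s IH]; rewrite inE => /predU1P [->|/IH]; [left | right]. Qed.

Definition shortest_in_class (X : Type) (rho : seq X -> seq X -> Prop) (a : seq X) :=
  forall y, rho a y -> size a <= size y.

Lemma long_class (X : finType) (rho : seq X -> seq X -> Prop) K :
  infinitely_many_classes rho -> exists a, forall y, rho a y -> K < size y.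
Proof.
move=> inf; apply: Classical_Prop.NNPP => no_long; apply: inf.
exists (words_upto X K) => a; apply: Classical_Prop.NNPP => no_rep; apply: no_long.
exists a => y rho_ay; rewrite ltnNge; apply/negP => le_y.
by apply: no_rep; exists y => //; apply/mem_In/words_uptoP.
Qed.

Lemma long_shortest_in_class (X : finType) (rho : seq X -> seq X -> Prop) K :
  prop_equivalence rho -> infinitely_many_classes rho ->
  exists a, K < size a /\ shortest_in_class rho a.
Proof.
move=> [refl [_ trans]] /(long_class K) [a0 long_a0].
have [k [[[a [rho_a0a <-]] min_k] _]] :=
  Wf_nat.dec_inh_nat_subset_has_unique_least_element
    (fun k => exists a, rho a0 a /\ size a = k) (fun k => Classical_Prop.classic _)
    (ex_intro _ _ (ex_intro _ a0 (conj (refl a0) erefl))).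
exists a; split=> [|y rho_ay]; first exact: long_a0.
by apply/leP/min_k; exists y; split=> //; apply: trans rho_a0a rho_ay.
Qed.

Lemma shortest_in_class_pair (X : Type) (rho : seq X -> seq X -> Prop) a c1 c2 :
  prop_equivalence rho -> shortest_in_class rho a -> rho c1 c2 -> c1 = a \/ c2 = a ->
  size a <= size c1 /\ size a <= size c2.
Proof.
move=> [refl [sym _]] min_a rho_c [E | E]; subst.
  by split; apply: min_a.
by split; apply: min_a => //; apply: sym.
Qed.

Theorem mainTheorem5 (A B : finType)
    (rhoA : seq A -> seq A -> Prop) (rhoB : seq B -> seq B -> Prop) :
  prop_equivalence rhoA -> prop_equivalence rhoB ->
  infinitely_many_classes rhoA -> infinitely_many_classes rhoB ->
  ~ context_free (L_rho rhoA rhoB).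
Proof.
move=> eqA eqB infA infB [G L_G].
have [p pump] := cfg_pump_down G.
have [a [lt_p_a min_a]] := long_shortest_in_class p eqA infA.
have [b [lt_p_b min_b]] := long_shortest_in_class p eqB infB.
have L_abab : L_rho rhoA rhoB (abab a b a b).
  by exists a, a, b, b; split; [exact: eqA.1 | split; [exact: eqB.1 |]].
have lt_p_abab : p < size (abab a b a b) by rewrite size_abab; lia.
have [u [v [x [y [z [Ew le_vxy lt0_vy G_uxz]]]]]] := pump _ ((L_G _).1 L_abab) lt_p_abab.
have [c1 [c2 [d1 [d2 [rho_c [rho_d Ec]]]]]] := (L_G _).2 G_uxz.
have lt_vxy_a := leq_ltn_trans le_vxy lt_p_a.
have lt_vxy_b := leq_ltn_trans le_vxy lt_p_b.
have [keep_a keep_b] := abab_pump_window Ew lt_vxy_a lt_vxy_b lt_vxy_a lt_vxy_b Ec.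
have [le_a_c1 le_a_c2] := shortest_in_class_pair eqA min_a rho_c keep_a.
have [le_b_d1 le_b_d2] := shortest_in_class_pair eqB min_b rho_d keep_b.
move: lt0_vy (congr1 size Ew) (congr1 size Ec); rewrite size_abab !size_cat !size_map.
lia.
Qed.
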